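(* Let $n\ge1$ be an integer. There exists a constant $C=C(n)>0$ such that for all pairwise distinct points $z_1,z_2,z_3\in\mathbb{R}^2$ and $i=1,2$, $$p_i(z_1,z_2,z_3)\le C\,c(z_1,z_2,z_3)^2.$$
   Context: For $i=1,2$ and $x\in\mathbb{R}^2\setminus\{0\}$, $K_i(x)=x_i^{2n-1}/|x|^{2n}$, and $p_i(z_1,z_2,z_3)=K_i(z_1-z_2)K_i(z_1-z_3)+K_i(z_2-z_1)K_i(z_2-z_3)+K_i(z_3-z_1)K_i(z_3-z_2)$. The Menger curvature $c(z_1,z_2,z_3)$ is the inverse of the radius of the circle through $z_1,z_2,z_3$ (equal to $0$ if the points are collinear). *)

From Stdlib Require Import Reals ClassicalEpsilon.
Open Scope R_scope.

Definition pt := (R * R)%type.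

Definition psub (x y : pt) : pt := (fst x - fst y, snd x - snd y).

(* i-th coordinate, i = 1 or 2 (any i <> 1 gives the second coordinate;
   the theorem only uses i = 1, 2). *)
Definition coord (i : nat) (x : pt) : R := if Nat.eqb i 1 then fst x else snd x.

Definition nrm2 (x : pt) : R := fst x ^ 2 + snd x ^ 2.
Definition dist2 (x y : pt) : R := sqrt (nrm2 (psub x y)).

Definition K (n i : nat) (x : pt) : R := coord i x ^ (2 * n - 1) / (nrm2 x) ^ n.

Definition p (n i : nat) (z1 z2 z3 : pt) : R :=
  K n i (psub z1 z2) * K n i (psub z1 z3)
  + K n i (psub z2 z1) * K n i (psub z2 z3)
  + K n i (psub z3 z1) * K n i (psub z3 z2).

Definition collinear (z1 z2 z3 : pt) : Prop :=
  (fst z2 - fst z1) * (snd z3 - snd z1) - (snd z2 - snd z1) * (fst z3 - fst z1) = 0.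

Definition is_circumradius (z1 z2 z3 : pt) (r : R) : Prop :=
  0 < r /\ exists w : pt, dist2 z1 w = r /\ dist2 z2 w = r /\ dist2 z3 w = r.

Definition circumradius (z1 z2 z3 : pt) : R :=
  epsilon (inhabits 0) (is_circumradius z1 z2 z3).

Definition menger (z1 z2 z3 : pt) : R :=
  match excluded_middle_informative (collinear z1 z2 z3) with
  | left _ => 0
  | right _ => / circumradius z1 z2 z3
  end.

From Stdlib Require Import Reals Lra Lia Psatz ClassicalEpsilon.
Open Scope R_scope.

(* Write u = z2 - z1, v = z3 - z1 and w = v - u for the edge vectors.  As K_1
   is odd, p_1 = K(u)K(v) - K(u)K(w) + K(v)K(w), and when the first coordinates
   do not vanish K(x) = 1 / (x_1 rho(s_x)) with rho(t) = (1 + t^2)^n and s_x the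
   slope of x.  From v_1 = u_1 + w_1 and v_1 s_v = u_1 s_u + w_1 s_w, the common
   numerator u_1 rho(s_u) + w_1 rho(s_w) - v_1 rho(s_v) equals
   u_1 w_1 / v_1 (s_u - s_w)^2 times the second divided difference D of rho.
   Hence p_1 is exactly (u x v)^2 / (|u|^2 |v|^2 |w|^2) = c^2 / 4 times
   D / ((1 + s_u^2)(1 + s_v^2)(1 + s_w^2))^(n-1), and this quotient is bounded
   because D has degree 2n - 2.  Triangles with a vertical side are handled
   directly, and p_2 is p_1 with the coordinates swapped. *)

Lemma sq_pos x : x <> 0 -> 0 < x ^ 2.
Proof. rewrite <- Rsqr_pow2. apply Rsqr_pos_lt. Qed.

Lemma sq_le_of_abs_le t m : Rabs t <= m -> t ^ 2 <= m ^ 2.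
Proof. intros H. rewrite <- (pow2_abs t). apply pow_incr. split; [apply Rabs_pos | exact H]. Qed.

Lemma div_unit_interval u v : 0 <= u <= v -> 0 < v -> 0 <= u / v <= 1.
Proof.
  intros Huv Hv. split.
  - apply Rmult_le_pos; [lra | left; apply Rinv_0_lt_compat, Hv].
  - apply Rmult_le_reg_r with v; [exact Hv|]. unfold Rdiv.
    rewrite Rmult_assoc, Rinv_l, Rmult_1_r, Rmult_1_l; lra.
Qed.

(* First and second divided differences of t |-> (1 + t^2)^n at the nodes
   (y, z) and (x, y, z); see ddiff_expansion. *)
Fixpoint ddiff1 (n : nat) (y z : R) : R :=
  match n with
  | O => 0
  | S k => (1 + z ^ 2) ^ k * (z + y) + ddiff1 k y z * (1 + y ^ 2)
  end.

Fixpoint ddiff2 (n : nat) (x y z : R) : R :=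
  match n with
  | O => 0
  | S k => (1 + z ^ 2) ^ k + ddiff1 k y z * (y + x) + ddiff2 k x y z * (1 + x ^ 2)
  end.

Lemma ddiff_expansion n x y z :
  (1 + y ^ 2) ^ n = (1 + z ^ 2) ^ n + (y - z) * ddiff1 n y z /\
  (1 + x ^ 2) ^ n = (1 + z ^ 2) ^ n + (x - z) * ddiff1 n y z
                    + (x - z) * (x - y) * ddiff2 n x y z.
Proof.
  induction n as [|k [Hy Hx]]; cbn [ddiff1 ddiff2].
  - split; ring.
  - rewrite <- (tech_pow_Rmult (1 + x ^ 2)), <- (tech_pow_Rmult (1 + y ^ 2)),
      <- (tech_pow_Rmult (1 + z ^ 2)), Hx, Hy.
    split; ring.
Qed.

Lemma one_plus_sq_pow_bound k t m : 1 <= m -> Rabs t <= m ->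
  0 <= (1 + t ^ 2) ^ k <= 2 ^ k * m ^ (2 * k).
Proof.
  intros Hm Ht. pose proof (sq_le_of_abs_le t m Ht).
  rewrite pow_mult, <- Rpow_mult_distr.
  split; [apply pow_le; nra | apply pow_incr; nra].
Qed.

Lemma ddiff1_bound n : exists al, 0 <= al /\
  forall y z m, 1 <= m -> Rabs y <= m -> Rabs z <= m ->
  Rabs (ddiff1 n y z) * m <= al * m ^ (2 * n).
Proof.
  induction n as [|k [al [Hal IH]]].
  - exists 0. split; [lra|]. intros. simpl. rewrite Rabs_R0. lra.
  - exists (2 * 2 ^ k + 2 * al). split; [pose proof (pow_le 2 k); lra|].
    intros y z m Hm Hy Hz. specialize (IH y z m Hm Hy Hz).
    destruct (one_plus_sq_pow_bound k z m Hm Hz) as [R0 R1].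
    pose proof (sq_le_of_abs_le y m Hy).
    assert (Hzy : Rabs (z + y) <= 2 * m) by (eapply Rle_trans; [apply Rabs_triang | lra]).
    assert (E1 : (1 + z ^ 2) ^ k * Rabs (z + y) * m <= 2 ^ k * m ^ (2 * k) * (2 * m) * m).
    { apply Rmult_le_compat_r; [lra|]. apply Rmult_le_compat; auto using Rabs_pos. }
    assert (E2 : Rabs (ddiff1 k y z) * m * (1 + y ^ 2) <= al * m ^ (2 * k) * (2 * m ^ 2)).
    { apply Rmult_le_compat; [pose proof (Rabs_pos (ddiff1 k y z)); nra | nra | exact IH | nra]. }
    replace (2 * S k)%nat with (2 * k + 2)%nat by lia. rewrite pow_add. cbn [ddiff1].
    eapply Rle_trans. { apply Rmult_le_compat_r; [lra|]. apply Rabs_triang. }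
    rewrite !Rabs_mult, (Rabs_pos_eq ((1 + z ^ 2) ^ k)), (Rabs_pos_eq (1 + y ^ 2)) by nra.
    nra.
Qed.

Lemma ddiff2_bound n : exists be, 0 <= be /\
  forall x y z m, 1 <= m -> Rabs x <= m -> Rabs y <= m -> Rabs z <= m ->
  Rabs (ddiff2 n x y z) * m ^ 2 <= be * m ^ (2 * n).
Proof.
  induction n as [|k [be [Hbe IH]]].
  - exists 0. split; [lra|]. intros. simpl. rewrite Rabs_R0. lra.
  - destruct (ddiff1_bound k) as [al [Hal H1]].
    exists (2 ^ k + 2 * al + 2 * be). split; [pose proof (pow_le 2 k); lra|].
    intros x y z m Hm Hx Hy Hz.
    specialize (IH x y z m Hm Hx Hy Hz). specialize (H1 y z m Hm Hy Hz).
    destruct (one_plus_sq_pow_bound k z m Hm Hz) as [R0 R1].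
    pose proof (sq_le_of_abs_le x m Hx).
    assert (Hyx : Rabs (y + x) <= 2 * m) by (eapply Rle_trans; [apply Rabs_triang | lra]).
    assert (E1 : (1 + z ^ 2) ^ k * m ^ 2 <= 2 ^ k * m ^ (2 * k) * m ^ 2).
    { apply Rmult_le_compat_r; nra. }
    assert (E2 : Rabs (ddiff1 k y z) * m * (Rabs (y + x) * m) <= al * m ^ (2 * k) * (2 * m ^ 2)).
    { apply Rmult_le_compat; [pose proof (Rabs_pos (ddiff1 k y z)); nra
                             | pose proof (Rabs_pos (y + x)); nra | exact H1 | nra]. }
    assert (E3 : Rabs (ddiff2 k x y z) * m ^ 2 * (1 + x ^ 2) <= be * m ^ (2 * k) * (2 * m ^ 2)).
    { apply Rmult_le_compat; [pose proof (Rabs_pos (ddiff2 k x y z)); nra | nra | exact IH | nra]. }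
    replace (2 * S k)%nat with (2 * k + 2)%nat by lia. rewrite pow_add. cbn [ddiff2].
    eapply Rle_trans.
    { apply Rmult_le_compat_r; [nra|]. eapply Rle_trans; [apply Rabs_triang|].
      apply Rplus_le_compat_r, Rabs_triang. }
    rewrite !Rabs_mult, (Rabs_pos_eq ((1 + z ^ 2) ^ k)), (Rabs_pos_eq (1 + x ^ 2)) by nra.
    nra.
Qed.

Lemma ddiff2_bound_prod n : exists be, 0 <= be /\ forall x y z,
  Rabs (ddiff2 n x y z) * ((1 + x ^ 2) * (1 + y ^ 2) * (1 + z ^ 2))
  <= be * ((1 + x ^ 2) * (1 + y ^ 2) * (1 + z ^ 2)) ^ n.
Proof.
  destruct (ddiff2_bound n) as [be [Hbe HD]]. exists be. split; [exact Hbe|].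
  intros x y z. set (Q := (1 + x ^ 2) * (1 + y ^ 2) * (1 + z ^ 2)).
  assert (HQ : forall t, t = x \/ t = y \/ t = z -> t ^ 2 <= Q /\ 1 <= Q).
  { intros t Ht. unfold Q. split; [destruct Ht as [->|[->| ->]]|]; nra. }
  assert (Hm2 : sqrt Q ^ 2 = Q) by (apply pow2_sqrt; destruct (HQ x); auto; lra).
  assert (Habs : forall t, t = x \/ t = y \/ t = z -> Rabs t <= sqrt Q).
  { intros t Ht. rewrite <- (sqrt_pow2 (Rabs t)) by apply Rabs_pos.
    apply sqrt_le_1_alt. rewrite pow2_abs. apply HQ, Ht. }
  assert (Hm : 1 <= sqrt Q).
  { rewrite <- sqrt_1. apply sqrt_le_1_alt. apply (HQ x). auto. }
  specialize (HD x y z (sqrt Q) Hm (Habs x ltac:(auto)) (Habs y ltac:(auto)) (Habs z ltac:(auto))).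
  rewrite pow_mult, Hm2 in HD. exact HD.
Qed.

Definition kern (n : nat) (x y : R) : R := x ^ (2 * n - 1) / (x ^ 2 + y ^ 2) ^ n.

Definition kern_sum (n : nat) (a a' b b' : R) : R :=
  kern n a a' * kern n b b' - kern n a a' * kern n (b - a) (b' - a')
  + kern n b b' * kern n (b - a) (b' - a').

Definition curv_ratio (a a' b b' : R) : R :=
  (a * b' - a' * b) ^ 2 / ((a ^ 2 + a' ^ 2) * (b ^ 2 + b' ^ 2) * ((b - a) ^ 2 + (b' - a') ^ 2)).

Lemma odd_pow_pred n x : (1 <= n)%nat -> x ^ (2 * n - 1) = x * (x ^ 2) ^ (n - 1).
Proof. intros Hn. rewrite <- pow_mult, tech_pow_Rmult. f_equal. lia. Qed.

Lemma pow_pred n x : (1 <= n)%nat -> x ^ n = x * x ^ (n - 1).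
Proof. intros Hn. rewrite tech_pow_Rmult. f_equal. lia. Qed.

Lemma kern_slope n x y : (1 <= n)%nat -> x <> 0 -> kern n x y = / (x * (1 + (y / x) ^ 2) ^ n).
Proof.
  intros Hn Hx. unfold kern.
  replace (x ^ 2 + y ^ 2) with (x ^ 2 * (1 + (y / x) ^ 2)) by (field; auto).
  rewrite Rpow_mult_distr, odd_pow_pred, (pow_pred n (x ^ 2)) by auto.
  assert ((x ^ 2) ^ (n - 1) <> 0) by (apply pow_nonzero, pow_nonzero, Hx).
  assert ((1 + (y / x) ^ 2) ^ n <> 0) by (apply pow_nonzero; nra).
  field; auto.
Qed.

Lemma kern_opp n x y : (1 <= n)%nat -> kern n (- x) (- y) = - kern n x y.
Proof.
  intros Hn. unfold kern. rewrite !odd_pow_pred by auto.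
  replace ((- x) ^ 2) with (x ^ 2) by ring. replace ((- y) ^ 2) with (y ^ 2) by ring.
  unfold Rdiv. ring.
Qed.

Lemma kern_zero n y : (1 <= n)%nat -> kern n 0 y = 0.
Proof. intros Hn. unfold kern. rewrite pow_i by lia. unfold Rdiv. ring. Qed.

Lemma kern_mul_le n x y z : (1 <= n)%nat -> 0 < x ^ 2 + y ^ 2 -> 0 < x ^ 2 + z ^ 2 ->
  kern n x y * kern n x z <= x ^ 2 / ((x ^ 2 + y ^ 2) * (x ^ 2 + z ^ 2)).
Proof.
  intros Hn HP HR. unfold kern.
  set (P := x ^ 2 + y ^ 2) in *. set (R := x ^ 2 + z ^ 2) in *.
  rewrite odd_pow_pred, (pow_pred n P), (pow_pred n R) by auto.
  assert (HP1 : 0 <= (x ^ 2) ^ (n - 1) <= P ^ (n - 1)).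
  { split; [apply pow_le | apply pow_incr]; unfold P; nra. }
  assert (HR1 : 0 <= (x ^ 2) ^ (n - 1) <= R ^ (n - 1)).
  { split; [apply pow_le | apply pow_incr]; unfold R; nra. }
  assert (0 < P ^ (n - 1)) by (apply pow_lt; lra).
  assert (0 < R ^ (n - 1)) by (apply pow_lt; lra).
  replace (x * (x ^ 2) ^ (n - 1) / (P * P ^ (n - 1)) * (x * (x ^ 2) ^ (n - 1) / (R * R ^ (n - 1))))
    with (x ^ 2 / (P * R) * ((x ^ 2) ^ (n - 1) / P ^ (n - 1) * ((x ^ 2) ^ (n - 1) / R ^ (n - 1))))
    by (field; lra).
  rewrite <- (Rmult_1_r (x ^ 2 / (P * R))) at 2.
  apply Rmult_le_compat_l.
  { apply Rmult_le_pos; [nra | left; apply Rinv_0_lt_compat; nra]. }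
  pose proof (div_unit_interval _ _ HP1 ltac:(assumption)).
  pose proof (div_unit_interval _ _ HR1 ltac:(assumption)).
  nra.
Qed.

Lemma curv_ratio_nonneg a a' b b' : 0 <= curv_ratio a a' b b'.
Proof.
  unfold curv_ratio.
  set (d := (a ^ 2 + a' ^ 2) * (b ^ 2 + b' ^ 2) * ((b - a) ^ 2 + (b' - a') ^ 2)).
  assert (0 <= d).
  { unfold d. apply Rmult_le_pos; [apply Rmult_le_pos|];
      apply Rplus_le_le_0_compat; apply pow2_ge_0. }
  apply Rmult_le_pos; [apply pow2_ge_0|].
  destruct (Req_dec d 0) as [->|Hd]; [rewrite Rinv_0; lra|].
  left; apply Rinv_0_lt_compat; lra.
Qed.

Section GenericPosition.

Variables (n : nat) (a a' b b' : R).
Hypotheses (Hn : (1 <= n)%nat) (Ha : a <> 0) (Hb : b <> 0) (Hba : b - a <> 0).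

Let s1 := a' / a.
Let s2 := (b' - a') / (b - a).
Let s3 := b' / b.
Let Q := (1 + s1 ^ 2) * (1 + s2 ^ 2) * (1 + s3 ^ 2).

Lemma slope_combination_eq :
  a * (1 + s1 ^ 2) ^ n + (b - a) * (1 + s2 ^ 2) ^ n - b * (1 + s3 ^ 2) ^ n
  = a * (b - a) / b * (s1 - s2) ^ 2 * ddiff2 n s1 s2 s3.
Proof.
  destruct (ddiff_expansion n s1 s2 s3) as [Hy Hx]. rewrite Hx, Hy.
  unfold s1, s2, s3. field. auto.
Qed.

Lemma kern_sum_eq : kern_sum n a a' b b' = curv_ratio a a' b b' * (Q * ddiff2 n s1 s2 s3 / Q ^ n).
Proof.
  unfold kern_sum. rewrite !kern_slope by auto. fold s1 s2 s3.
  assert (Hq : forall s, 0 < 1 + s ^ 2) by (intros; nra).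
  assert (Hr : forall s, (1 + s ^ 2) ^ n <> 0) by (intros; apply pow_nonzero, Rgt_not_eq, Hq).
  transitivity ((a * (1 + s1 ^ 2) ^ n + (b - a) * (1 + s2 ^ 2) ^ n - b * (1 + s3 ^ 2) ^ n)
    / (a * b * (b - a) * (1 + s1 ^ 2) ^ n * (1 + s2 ^ 2) ^ n * (1 + s3 ^ 2) ^ n)).
  { field. repeat split; auto. }
  rewrite slope_combination_eq. unfold Q. rewrite !Rpow_mult_distr.
  unfold curv_ratio, s1, s2, s3.
  pose proof (sq_pos a Ha). pose proof (sq_pos b Hb). pose proof (sq_pos _ Hba).
  field. repeat split; auto; apply Rgt_not_eq, Rplus_lt_le_0_compat; auto using pow2_ge_0.
Qed.

Lemma kern_sum_le_generic be :
  (forall x y z, Rabs (ddiff2 n x y z) * ((1 + x ^ 2) * (1 + y ^ 2) * (1 + z ^ 2))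
                 <= be * ((1 + x ^ 2) * (1 + y ^ 2) * (1 + z ^ 2)) ^ n) ->
  kern_sum n a a' b b' <= be * curv_ratio a a' b b'.
Proof.
  intros HD. rewrite kern_sum_eq, Rmult_comm.
  apply Rmult_le_compat_r; [apply curv_ratio_nonneg|].
  assert (HQ : 0 < Q ^ n) by (apply pow_lt; unfold Q; nra).
  apply Rmult_le_reg_r with (Q ^ n); [exact HQ|]. unfold Rdiv.
  rewrite Rmult_assoc, Rinv_l, Rmult_1_r by lra.
  eapply Rle_trans; [|apply (HD s1 s2 s3)]. fold Q.
  rewrite Rmult_comm. apply Rmult_le_compat_r; [unfold Q; nra | apply Rle_abs].
Qed.

End GenericPosition.

Lemma kern_sum_le_degenerate n a a' b b' : (1 <= n)%nat ->
  0 < a ^ 2 + a' ^ 2 -> 0 < b ^ 2 + b' ^ 2 -> 0 < (b - a) ^ 2 + (b' - a') ^ 2 ->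
  a = 0 \/ b = 0 \/ b - a = 0 ->
  kern_sum n a a' b b' <= curv_ratio a a' b b'.
Proof.
  intros Hn HU HV HW [Ha | [Hb | Hba]]; unfold kern_sum.
  - subst a. rewrite Rminus_0_r in *. rewrite kern_zero by exact Hn.
    assert (a' <> 0) by (intros ->; simpl in HU; lra).
    replace (curv_ratio 0 a' b b') with (b ^ 2 / ((b ^ 2 + b' ^ 2) * (b ^ 2 + (b' - a') ^ 2)))
      by (unfold curv_ratio; field; split; lra).
    pose proof (kern_mul_le n b b' (b' - a') Hn HV HW). lra.
  - subst b. replace (0 - a) with (- a) in * by ring.
    replace (b' - a') with (- (a' - b')) by ring.
    rewrite kern_zero, kern_opp by exact Hn.
    assert (b' <> 0) by (intros ->; simpl in HV; lra).
    replace (curv_ratio a a' 0 b') with (a ^ 2 / ((a ^ 2 + a' ^ 2) * (a ^ 2 + (a' - b') ^ 2)))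
      by (unfold curv_ratio; field; repeat split; nra).
    replace ((- a) ^ 2 + (b' - a') ^ 2) with (a ^ 2 + (a' - b') ^ 2) in HW by ring.
    pose proof (kern_mul_le n a a' (a' - b') Hn HU HW). lra.
  - assert (b = a) by lra. subst b. rewrite Rminus_diag in *. rewrite kern_zero by exact Hn.
    assert (b' - a' <> 0) by (intros Hz; rewrite Hz in HW; simpl in HW; lra).
    replace (curv_ratio a a' a b') with (a ^ 2 / ((a ^ 2 + a' ^ 2) * (a ^ 2 + b' ^ 2)))
      by (unfold curv_ratio; rewrite Rminus_diag; field; repeat split; nra).
    pose proof (kern_mul_le n a a' b' Hn HU HV). lra.
Qed.

Lemma kern_sum_le n : (1 <= n)%nat -> exists C, 0 < C /\ forall a a' b b',
  0 < a ^ 2 + a' ^ 2 -> 0 < b ^ 2 + b' ^ 2 -> 0 < (b - a) ^ 2 + (b' - a') ^ 2 ->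
  kern_sum n a a' b b' <= C * curv_ratio a a' b b'.
Proof.
  intros Hn. destruct (ddiff2_bound_prod n) as [be [Hbe HD]].
  exists (be + 1). split; [lra|]. intros a a' b b' HU HV HW.
  pose proof (curv_ratio_nonneg a a' b b').
  destruct (Req_dec a 0) as [Ha|Ha];
    [|destruct (Req_dec b 0) as [Hb|Hb]; [|destruct (Req_dec (b - a) 0) as [Hba|Hba]]].
  1-3: pose proof (kern_sum_le_degenerate n a a' b b' Hn HU HV HW ltac:(auto)); nra.
  pose proof (kern_sum_le_generic n a a' b b' Hn Ha Hb Hba be HD). nra.
Qed.

Lemma circle_radius_identity a a' b b' q1 q2 r :
  q1 ^ 2 + q2 ^ 2 = r ^ 2 -> (a - q1) ^ 2 + (a' - q2) ^ 2 = r ^ 2 ->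
  (b - q1) ^ 2 + (b' - q2) ^ 2 = r ^ 2 ->
  4 * (a * b' - a' * b) ^ 2 * r ^ 2
  = (a ^ 2 + a' ^ 2) * (b ^ 2 + b' ^ 2) * ((b - a) ^ 2 + (b' - a') ^ 2).
Proof.
  intros H0 Ha Hb.
  assert (La : 2 * (a * q1 + a' * q2) = a ^ 2 + a' ^ 2) by nra.
  assert (Lb : 2 * (b * q1 + b' * q2) = b ^ 2 + b' ^ 2) by nra.
  assert (M1 : 2 * (a * b' - a' * b) * q1 = b' * (a ^ 2 + a' ^ 2) - a' * (b ^ 2 + b' ^ 2))
    by (rewrite <- La, <- Lb; ring).
  assert (M2 : 2 * (a * b' - a' * b) * q2 = a * (b ^ 2 + b' ^ 2) - b * (a ^ 2 + a' ^ 2))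
    by (rewrite <- La, <- Lb; ring).
  rewrite <- H0.
  replace (4 * (a * b' - a' * b) ^ 2 * (q1 ^ 2 + q2 ^ 2))
    with ((2 * (a * b' - a' * b) * q1) ^ 2 + (2 * (a * b' - a' * b) * q2) ^ 2) by ring.
  rewrite M1, M2. ring.
Qed.

Lemma circle_center_exists a a' b b' : a * b' - a' * b <> 0 -> exists q1 q2,
  0 < q1 ^ 2 + q2 ^ 2 /\
  (a - q1) ^ 2 + (a' - q2) ^ 2 = q1 ^ 2 + q2 ^ 2 /\
  (b - q1) ^ 2 + (b' - q2) ^ 2 = q1 ^ 2 + q2 ^ 2.
Proof.
  intros HD.
  exists ((b' * (a ^ 2 + a' ^ 2) - a' * (b ^ 2 + b' ^ 2)) / (2 * (a * b' - a' * b))),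
         ((a * (b ^ 2 + b' ^ 2) - b * (a ^ 2 + a' ^ 2)) / (2 * (a * b' - a' * b))).
  set (q1 := (b' * _ - _) / _). set (q2 := (a * _ - _) / _).
  assert (Ea : (a - q1) ^ 2 + (a' - q2) ^ 2 = q1 ^ 2 + q2 ^ 2) by (unfold q1, q2; field; exact HD).
  assert (Eb : (b - q1) ^ 2 + (b' - q2) ^ 2 = q1 ^ 2 + q2 ^ 2) by (unfold q1, q2; field; exact HD).
  split; [|split; assumption].
  destruct (Rle_lt_or_eq_dec 0 (q1 ^ 2 + q2 ^ 2)) as [|Hz]; [nra | assumption |].
  exfalso. assert (q1 = 0 /\ q2 = 0) as [-> ->] by nra.
  assert (a = 0 /\ a' = 0) as [-> ->] by nra.
  apply HD. ring.
Qed.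

Lemma dist2_sq z w r : dist2 z w = r -> nrm2 (psub z w) = r ^ 2.
Proof.
  intros <-. unfold dist2. rewrite pow2_sqrt; [reflexivity|].
  unfold nrm2. apply Rplus_le_le_0_compat; apply pow2_ge_0.
Qed.

Lemma menger_sq x1 y1 x2 y2 x3 y3 :
  menger (x1, y1) (x2, y2) (x3, y3) ^ 2
  = 4 * curv_ratio (x2 - x1) (y2 - y1) (x3 - x1) (y3 - y1).
Proof.
  unfold menger.
  destruct (excluded_middle_informative _) as [Hcol | Hcol];
    unfold collinear in Hcol; cbn [fst snd] in Hcol.
  - unfold curv_ratio. rewrite Hcol. unfold Rdiv. ring.
  - assert (Hex : exists r, is_circumradius (x1, y1) (x2, y2) (x3, y3) r).
    { destruct (circle_center_exists _ _ _ _ Hcol) as [q1 [q2 [Hpos [Ea Eb]]]].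
      exists (sqrt (q1 ^ 2 + q2 ^ 2)). split; [apply sqrt_lt_R0, Hpos|].
      exists (x1 + q1, y1 + q2). unfold dist2, nrm2, psub; cbn [fst snd].
      split; [|split]; f_equal; [ring | rewrite <- Ea; ring | rewrite <- Eb; ring]. }
    pose proof (epsilon_spec (inhabits 0) _ Hex) as Hs.
    set (r := circumradius _ _ _). change (is_circumradius (x1, y1) (x2, y2) (x3, y3) r) in Hs.
    destruct Hs as [Hr [[wx wy] [E1 [E2 E3]]]].
    apply dist2_sq in E1, E2, E3. unfold nrm2, psub in E1, E2, E3; cbn [fst snd] in E1, E2, E3.
    assert (Id := circle_radius_identity (x2 - x1) (y2 - y1) (x3 - x1) (y3 - y1)
                    (wx - x1) (wy - y1) r
                    ltac:(rewrite <- E1; ring) ltac:(rewrite <- E2; ring)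
                    ltac:(rewrite <- E3; ring)).
    unfold curv_ratio. rewrite <- Id. field. split; [lra | exact Hcol].
Qed.

Lemma K1_psub n z w : K n 1 (psub z w) = kern n (fst z - fst w) (snd z - snd w).
Proof. reflexivity. Qed.

Lemma K2_psub n z w : K n 2 (psub z w) = kern n (snd z - snd w) (fst z - fst w).
Proof.
  unfold K, kern, coord, nrm2, psub. cbn [Nat.eqb fst snd].
  rewrite Rplus_comm. reflexivity.
Qed.

Lemma kern_sub_swap n x1 x2 y1 y2 : (1 <= n)%nat ->
  kern n (x1 - x2) (y1 - y2) = - kern n (x2 - x1) (y2 - y1).
Proof.
  intros Hn. rewrite <- kern_opp by exact Hn. f_equal; ring.
Qed.

Lemma p1_eq n x1 y1 x2 y2 x3 y3 : (1 <= n)%nat ->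
  p n 1 (x1, y1) (x2, y2) (x3, y3) = kern_sum n (x2 - x1) (y2 - y1) (x3 - x1) (y3 - y1).
Proof.
  intros Hn. unfold p, kern_sum. rewrite !K1_psub. cbn [fst snd].
  rewrite !(kern_sub_swap n x1), (kern_sub_swap n x2 x3) by exact Hn.
  replace (x3 - x2) with (x3 - x1 - (x2 - x1)) by ring.
  replace (y3 - y2) with (y3 - y1 - (y2 - y1)) by ring.
  ring.
Qed.

Lemma p2_eq n x1 y1 x2 y2 x3 y3 : (1 <= n)%nat ->
  p n 2 (x1, y1) (x2, y2) (x3, y3) = kern_sum n (y2 - y1) (x2 - x1) (y3 - y1) (x3 - x1).
Proof.
  intros Hn. unfold p, kern_sum. rewrite !K2_psub. cbn [fst snd].
  rewrite !(kern_sub_swap n y1), (kern_sub_swap n y2 y3) by exact Hn.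
  replace (y3 - y2) with (y3 - y1 - (y2 - y1)) by ring.
  replace (x3 - x2) with (x3 - x1 - (x2 - x1)) by ring.
  ring.
Qed.

Lemma curv_ratio_swap a a' b b' : curv_ratio a' a b' b = curv_ratio a a' b b'.
Proof.
  unfold curv_ratio, Rdiv. f_equal; [|f_equal]; ring.
Qed.

Lemma sq_dist_pos x1 y1 x2 y2 : (x1, y1) <> (x2, y2) -> 0 < (x2 - x1) ^ 2 + (y2 - y1) ^ 2.
Proof.
  intros H. destruct (Req_dec x1 x2) as [<-|Hx].
  - assert (Hy : y2 - y1 <> 0) by (intros Hy; apply H; f_equal; lra).
    pose proof (sq_pos _ Hy). pose proof (pow2_ge_0 (x1 - x1)). lra.
  - pose proof (sq_pos (x2 - x1) ltac:(lra)). pose proof (pow2_ge_0 (y2 - y1)). lra.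
Qed.

Theorem lemma2p2 : forall n : nat, (1 <= n)%nat ->
  exists C : R, 0 < C /\
    forall (z1 z2 z3 : pt), z1 <> z2 -> z1 <> z3 -> z2 <> z3 ->
    forall i : nat, (i = 1 \/ i = 2)%nat ->
      p n i z1 z2 z3 <= C * (menger z1 z2 z3) ^ 2.
Proof.
  intros n Hn. destruct (kern_sum_le n Hn) as [C [HC Hle]].
  exists (C / 4). split; [lra|].
  intros [x1 y1] [x2 y2] [x3 y3] H12 H13 H23 i Hi.
  pose proof (sq_dist_pos _ _ _ _ H12) as HU.
  pose proof (sq_dist_pos _ _ _ _ H13) as HV.
  pose proof (sq_dist_pos _ _ _ _ H23) as HW.
  replace (x3 - x2) with (x3 - x1 - (x2 - x1)) in HW by ring.
  replace (y3 - y2) with (y3 - y1 - (y2 - y1)) in HW by ring.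
  rewrite menger_sq.
  destruct Hi as [-> | ->].
  - rewrite p1_eq by exact Hn.
    specialize (Hle (x2 - x1) (y2 - y1) (x3 - x1) (y3 - y1) HU HV HW). lra.
  - rewrite p2_eq, <- (curv_ratio_swap (x2 - x1)) by exact Hn.
    specialize (Hle (y2 - y1) (x2 - x1) (y3 - y1) (x3 - x1) ltac:(lra) ltac:(lra) ltac:(lra)). lra.
Qed.
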